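(* Let $(A,\diamond,\circ,\lambda)$ be a left semi-truss such that $(A,\circ)$ is a group and $(A,\diamond)$ is a left cancellative semigroup with an idempotent $e$. For $x\in A$ let $x^\circ$ denote its inverse in $(A,\circ)$. Then the map $r:A\times A\to A\times A$, $$r(a,b)=\Big(a\circ e^\circ\circ\big((e\circ a^\circ\circ e)\diamond b\big),\; e\circ\big((e\circ a^\circ\circ e)\diamond b\big)^\circ\circ b\Big),$$ is a solution of the set-theoretic Yang–Baxter equation, i.e. $(r\times\mathrm{id})(\mathrm{id}\times r)(r\times\mathrm{id})=(\mathrm{id}\times r)(r\times\mathrm{id})(\mathrm{id}\times r)$ as maps $A^3\to A^3$.
   Context: A left semi-truss $(A,\diamond,\circ,\lambda)$ is a set $A$ with two associative binary operations $\diamond,\circ$ and a function $\lambda:A\times A\to A$ such that $a\circ(b\diamond c)=(a\circ b)\diamond\lambda(a,c)$ for all $a,b,c\in A$. A semigroup $(A,\diamond)$ is left cancellative if $a\diamond b=a\diamond c$ implies $b=c$. *)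

From Stdlib Require Import Utf8.

Definition associative {A : Type} (op : A -> A -> A) : Prop :=
  forall a b c, op a (op b c) = op (op a b) c.

Definition is_left_semi_truss {A : Type} (dia circ : A -> A -> A)
  (lam : A -> A -> A) : Prop :=
  associative dia /\ associative circ /\
  forall a b c, circ a (dia b c) = dia (circ a b) (lam a c).

Definition is_group {A : Type} (circ : A -> A -> A) (u : A) (inv : A -> A) : Prop :=
  associative circ /\
  (forall a, circ u a = a /\ circ a u = a) /\
  (forall a, circ a (inv a) = u /\ circ (inv a) a = u).

Definition left_cancellative {A : Type} (dia : A -> A -> A) : Prop :=
  forall a b c, dia a b = dia a c -> b = c.

Definition idempotent {A : Type} (dia : A -> A -> A) (e : A) : Prop :=
  dia e e = e.

Definition r_map {A : Type} (dia circ : A -> A -> A) (inv : A -> A) (e : A)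
  (p : A * A) : A * A :=
  let (a, b) := p in
  let t := dia (circ (circ e (inv a)) e) b in
  (circ (circ a (inv e)) t, circ (circ e (inv t)) b).

Definition r12 {A : Type} (r : A * A -> A * A) (x : A * A * A) : A * A * A :=
  let '(a, b, c) := x in let (a', b') := r (a, b) in (a', b', c).
Definition r23 {A : Type} (r : A * A -> A * A) (x : A * A * A) : A * A * A :=
  let '(a, b, c) := x in let (b', c') := r (b, c) in (a, b', c').

Definition is_YBE_solution {A : Type} (r : A * A -> A * A) : Prop :=
  forall x : A * A * A, r12 r (r23 r (r12 r x)) = r23 r (r12 r (r23 r x)).

(* Transport the group structure along x |-> x ∘ e^∘: then x ⋆ y := x ∘ e^∘ ∘ y is a group
   with identity e and inverse x^⋆ = e ∘ x^∘ ∘ e, and since e is a left identity for ⋄, the map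
   σ_a := λ(a ∘ e^∘, -) is an action of (A, ⋆) satisfying
   σ_a(b ⋆ c) = σ_a(b) ⋆ σ_{σ_a(b)^⋆ ⋆ a ⋆ b}(c).  In these terms r(a,b) = (σ_a(b), σ_a(b)^⋆ ⋆ a ⋆ b),
   and every map of this shape built from such an action is a solution. *)


Set Implicit Arguments.

Section Group.
Variables (G : Type) (m : G -> G -> G) (o : G) (i : G -> G).
Hypothesis Hgrp : is_group m o i.

Lemma mulgA : associative m.
Proof. exact (proj1 Hgrp). Qed.
Lemma mul1g x : m o x = x.
Proof. exact (proj1 (proj1 (proj2 Hgrp) x)). Qed.
Lemma mulg1 x : m x o = x.
Proof. exact (proj2 (proj1 (proj2 Hgrp) x)). Qed.
Lemma mulgV x : m x (i x) = o.
Proof. exact (proj1 (proj2 (proj2 Hgrp) x)). Qed.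
Lemma mulVg x : m (i x) x = o.
Proof. exact (proj2 (proj2 (proj2 Hgrp) x)). Qed.

Lemma mulKg x y : m (i x) (m x y) = y.
Proof. rewrite mulgA, mulVg, mul1g; reflexivity. Qed.
Lemma mulKVg x y : m x (m (i x) y) = y.
Proof. rewrite mulgA, mulgV, mul1g; reflexivity. Qed.

Lemma mulg_eq1_inv x y : m x y = o -> y = i x.
Proof. intros Hxy. rewrite <- (mulKg x y), Hxy, mulg1. reflexivity. Qed.

Lemma invgM x y : i (m x y) = m (i y) (i x).
Proof. symmetry. apply mulg_eq1_inv. rewrite <- mulgA, mulKVg, mulgV. reflexivity. Qed.
Lemma invgK x : i (i x) = x.
Proof. symmetry. apply mulg_eq1_inv, mulVg. Qed.
Lemma invg1 : i o = o.
Proof. symmetry. apply mulg_eq1_inv, mul1g. Qed.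

Definition shifted_mul (g x y : G) : G := m (m x (i g)) y.
Definition shifted_inv (g x : G) : G := m (m g (i x)) g.

End Group.

Ltac group_simpl Hgrp :=
  repeat progress rewrite <- ?(mulgA Hgrp), ?(mul1g Hgrp), ?(mulg1 Hgrp), ?(mulVg Hgrp),
    ?(mulgV Hgrp), ?(mulKg Hgrp), ?(mulKVg Hgrp), ?(invgM Hgrp), ?(invgK Hgrp), ?(invg1 Hgrp).

Lemma is_group_shifted (G : Type) (m : G -> G -> G) (o : G) (i : G -> G) (g : G) :
  is_group m o i -> is_group (shifted_mul m i g) g (shifted_inv m i g).
Proof.
  intros Hgrp. unfold shifted_mul, shifted_inv.
  split; [|split]; [intros x y z | intros x; split ..]; group_simpl Hgrp; reflexivity.
Qed.

Section MatchedAction.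
Variables (G : Type) (m : G -> G -> G) (o : G) (i : G -> G) (s : G -> G -> G).
Hypothesis Hgrp : is_group m o i.
Hypothesis s_mul : forall a b c, s (m a b) c = s a (s b c).
Hypothesis s_mulr : forall a b c, s a (m b c) = m (s a b) (s (m (m (i (s a b)) a) b) c).

Lemma ybe_of_matched_action (r : G * G -> G * G) :
  (forall x y, r (x, y) = (s x y, m (m (i (s x y)) x) y)) -> is_YBE_solution r.
Proof.
  intros Hr [[a b] c]. unfold r12, r23.
  repeat (rewrite Hr; simpl).
  set (a1 := s a b). set (b1 := m (m (i a1) a) b).
  set (b2 := s b1 c). set (b' := s b c). set (c' := m (m (i b') b) c).
  set (a'' := s a b'). set (b'' := m (m (i a'') a) b').
  assert (prod_ab : m a1 b1 = m a b) by (unfold b1; group_simpl Hgrp; reflexivity).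
  assert (prod_bc : m b' c' = m b c) by (unfold c'; group_simpl Hgrp; reflexivity).
  assert (first_eq : s a1 b2 = a'').
  { unfold b2, a''. rewrite <- s_mul, prod_ab, s_mul. reflexivity. }
  (* expand s a (b c) = s a (b' c') in two ways *)
  assert (second_eq : s b'' c' = m (i a'') (m a1 b2)).
  { assert (via_bc : s a (m b c) = m a1 b2) by apply s_mulr.
    assert (via_b'c' : s a (m b' c') = m a'' (s b'' c')) by apply s_mulr.
    rewrite <- prod_bc in via_bc. rewrite via_bc in via_b'c'.
    rewrite via_b'c'. group_simpl Hgrp. reflexivity. }
  rewrite first_eq, second_eq.
  f_equal; [f_equal|].
  - group_simpl Hgrp. reflexivity.
  - unfold b'', b1, c'. group_simpl Hgrp. reflexivity.
Qed.

End MatchedAction.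

Section SemiTruss.
Variables (A : Type) (dia circ lam : A -> A -> A) (u : A) (inv : A -> A) (e : A).
Hypothesis Htruss : is_left_semi_truss dia circ lam.
Hypothesis Hgrp : is_group circ u inv.
Hypothesis Hcan : left_cancellative dia.
Hypothesis He : idempotent dia e.

Let diaA : associative dia := proj1 Htruss.
Let circ_dia x y z : circ x (dia y z) = dia (circ x y) (lam x z) := proj2 (proj2 Htruss) x y z.

Lemma idem_diaL z : dia e z = z.
Proof. apply (@Hcan e). rewrite diaA, He. reflexivity. Qed.

Lemma lam1 z : lam u z = z.
Proof.
  apply (@Hcan e). pose proof (circ_dia u e z) as H.
  rewrite !(mul1g Hgrp) in H. symmetry; exact H.
Qed.

Lemma lamM x y z : lam (circ x y) z = lam x (lam y z).
Proof.
  apply (@Hcan (circ (circ x y) e)).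
  rewrite <- circ_dia, <- (mulgA Hgrp), circ_dia, circ_dia, (mulgA Hgrp). reflexivity.
Qed.

Lemma lam_dia x y z : lam x (dia y z) = dia (lam x y) (lam x z).
Proof.
  apply (@Hcan (circ x e)). rewrite <- circ_dia, diaA, circ_dia, circ_dia, diaA. reflexivity.
Qed.

Lemma circ_as_dia x z : circ x z = dia (circ x e) (lam x z).
Proof. rewrite <- circ_dia, idem_diaL. reflexivity. Qed.

Lemma dia_as_circ w v : dia w v = circ (circ w (inv e)) (lam (circ e (inv w)) v).
Proof. rewrite circ_as_dia, <- lamM. group_simpl Hgrp. rewrite lam1. reflexivity. Qed.

Definition sigma (a b : A) : A := lam (circ a (inv e)) b.

Notation "x ⋆ y" := (shifted_mul circ inv e x y) (at level 40, left associativity).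
Notation "x ^⋆" := (shifted_inv circ inv e x) (at level 30).

Lemma sigma_mul a b c : sigma (a ⋆ b) c = sigma a (sigma b c).
Proof. unfold sigma, shifted_mul. rewrite <- lamM. group_simpl Hgrp. reflexivity. Qed.

Lemma sigma_mulr a b c : sigma a (b ⋆ c) = sigma a b ⋆ sigma ((sigma a b)^⋆ ⋆ a ⋆ b) c.
Proof.
  assert (Ebc : b ⋆ c = dia b (sigma b c)).
  { unfold shifted_mul, sigma. rewrite circ_as_dia. group_simpl Hgrp. reflexivity. }
  unfold sigma at 1. rewrite Ebc, lam_dia, dia_as_circ.
  unfold sigma, shifted_mul, shifted_inv. rewrite <- !lamM. group_simpl Hgrp. reflexivity.
Qed.

Lemma r_map_sigma x y :
  r_map dia circ inv e (x, y) = (sigma x y, (sigma x y)^⋆ ⋆ x ⋆ y).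
Proof.
  assert (Esigma : x ⋆ dia (x^⋆) y = sigma x y).
  { unfold shifted_mul, shifted_inv, sigma. rewrite circ_dia. group_simpl Hgrp. apply idem_diaL. }
  unfold r_map. rewrite <- Esigma.
  f_equal. unfold shifted_mul, shifted_inv. group_simpl Hgrp. reflexivity.
Qed.

End SemiTruss.

Theorem corollary2p7 (A : Type) (dia circ lam : A -> A -> A) (u : A) (inv : A -> A) (e : A) :
  is_left_semi_truss dia circ lam ->
  is_group circ u inv ->
  left_cancellative dia ->
  idempotent dia e ->
  is_YBE_solution (r_map dia circ inv e).
Proof.
  intros Htruss Hgrp Hcan He.
  apply (ybe_of_matched_action (sigma circ lam inv e) (is_group_shifted e Hgrp)).
  - exact (sigma_mul e Htruss Hgrp Hcan).
  - exact (sigma_mulr Htruss Hgrp Hcan He).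
  - exact (r_map_sigma Htruss Hgrp Hcan He).
Qed.
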